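(* Let $\mathcal C_1,\mathcal C_2$ be normal rational curves in $\mathrm{PG}(N,q)$ spanning disjoint subspaces, and let $\mathcal C_1^*,\mathcal C_2^*$ be their $\mathbb{F}_{q^n}$-extensions in $\mathrm{PG}(N,q^n)$. Let $P\in\mathcal C_1^*\setminus\mathcal C_1$ and $Q\in\mathcal C_2^*\setminus\mathcal C_2$, with $P$ not contained in the $\mathbb{F}_{q^2}$-extension of $\mathcal C_1$. Then there is at most one normal rational scroll $S^*$ of $\mathrm{PG}(N,q^n)$ defined by $\mathcal C_1^*,\mathcal C_2^*$ that contains the line $\langle P,Q\rangle$ and is the $\mathbb{F}_{q^n}$-extension of a normal rational scroll of $\mathrm{PG}(N,q)$ defined by $\mathcal C_1,\mathcal C_2$. Moreover, if such a scroll exists, it contains the lines $\langle P^{\sigma^i},Q^{\sigma^i}\rangle$ for every $i$.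
   Context: $\mathrm{PG}(N,q)$ is embedded in $\mathrm{PG}(N,q^n)$ as the set of points with coordinates in $\mathbb{F}_q$ (up to scalar), and $\sigma$ is the collineation of $\mathrm{PG}(N,q^n)$ raising all coordinates to the $q$-th power, so $\mathrm{PG}(N,q)$ is the set of $\sigma$-fixed points. A normal rational curve of degree $d$ ($1\le d\le q$) in $\mathrm{PG}(N,q)$ is the image of a map $\rho:\mathrm{PG}(1,q)\to\mathrm{PG}(N,q)$, $(s,t)_{\mathbb{F}_q}\mapsto(\sum_{i=0}^d s^{d-i}t^ie_i)_{\mathbb{F}_q}$, for linearly independent vectors $e_0,\dots,e_d$; its $\mathbb{F}_{q^j}$-extension ($j\mid n$) is the image of the same formula with $(s,t)$ ranging over $\mathbb{F}_{q^j}^2\setminus\{0\}$. Given normal rational curves $\mathcal C_1=\mathrm{Im}(\rho_1)$ and $\mathcal C_2=\mathrm{Im}(\rho_2)$ spanning disjoint subspaces, a normal rational scroll defined by $\mathcal C_1,\mathcal C_2$ is a set of lines $\{\langle\rho_1(X),\rho_2(\psi(X))\rangle:X\in\mathrm{PG}(1,q)\}$ for some $\psi\in\mathrm{PGL}(2,q)$ (this family does not depend on the choice of parametrisations $\rho_i$). Its $\mathbb{F}_{q^n}$-extension is $\{\langle\rho_1^*(X),\rho_2^*(\psi^*(X))\rangle:X\in\mathrm{PG}(1,q^n)\}$, where $\rho_i^*,\psi^*$ are the same formulas over $\mathbb{F}_{q^n}$; a normal rational scroll of $\mathrm{PG}(N,q^n)$ defined by $\mathcal C_1^*,\mathcal C_2^*$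 is defined analogously with $\psi\in\mathrm{PGL}(2,q^n)$. *)

From HB Require Import structures.
From mathcomp Require Import all_boot all_order all_algebra all_field.
Set Implicit Arguments. Unset Strict Implicit. Unset Printing Implicit Defensive.
Import GRing.Theory.
Local Open Scope ring_scope.

(* L plays the role of F_{q^n}; F_{q^j} inside L is the set
   of x with x ^+ (q^j) = x.  Points of PG(N, L) are nonzero row vectors of
   'rV_(N.+1), two vectors representing the same point iff they span the same
   row space.  A line <P,Q> is represented by the 2 x (N+1) matrix col_mx P Q,
   two lines being equal iff their row spaces are equal. *)

Section Defs.
Variable L : fieldType.

Definition mx_fixed (m : nat) (r c : nat) (A : 'M[L]_(r, c)) : Prop :=
  forall i j, A i j ^+ m = A i j.

(* Frobenius-type map on coordinates: x |-> x^m  (sigma^i is m = q^i) *)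
Definition frob_mx (m : nat) (r c : nat) (A : 'M[L]_(r, c)) : 'M[L]_(r, c) :=
  map_mx (fun x => x ^+ m) A.

Definition nrc_vec (d : nat) (X : 'rV[L]_2) : 'rV[L]_(d.+1) :=
  \row_(i < d.+1) ((X 0 0) ^+ (d - i)%N * (X 0 1) ^+ i).

Definition rho (d N : nat) (e : 'M[L]_(d.+1, N.+1)) (X : 'rV[L]_2) : 'rV[L]_(N.+1) :=
  nrc_vec d X *m e.

(* P lies on the F_{q^j}-extension of the curve Im(rho) (m = q^j):
   P = rho(X) (as projective points) for some (s,t) in F_{q^j}^2 \ {0}. *)
Definition on_curve (m d N : nat) (e : 'M[L]_(d.+1, N.+1)) (P : 'rV[L]_(N.+1)) : Prop :=
  exists X : 'rV[L]_2, X != 0 /\ mx_fixed m X /\ (P == rho e X)%MS.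

Definition scroll_line (m d1 d2 N : nat) (e1 : 'M[L]_(d1.+1, N.+1))
    (e2 : 'M[L]_(d2.+1, N.+1)) (psi : 'M[L]_2) (M : 'M[L]_(2, N.+1)) : Prop :=
  exists X : 'rV[L]_2, X != 0 /\ mx_fixed m X /\
    (M == col_mx (rho e1 X) (rho e2 (X *m psi)))%MS.

(* S (a set of lines of PG(N,L)) is the F_{mp}-extension of a normal rational
   scroll defined by the curves with parametrisations e1, e2, with
   psi in PGL(2, F_{mc})  (psi given by an invertible 2x2 matrix with
   entries in F_{mc}). *)
Definition nr_scroll (mc mp d1 d2 N : nat) (e1 : 'M[L]_(d1.+1, N.+1))
    (e2 : 'M[L]_(d2.+1, N.+1)) (S : 'M[L]_(2, N.+1) -> Prop) : Prop :=
  exists psi : 'M[L]_2, psi \in unitmx /\ mx_fixed mc psi /\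
    forall M, S M <-> scroll_line mp e1 e2 psi M.

End Defs.

From HB Require Import structures.
From mathcomp Require Import all_boot all_order all_algebra all_field.
From mathcomp Require Import ring.
Import GRing.Theory.
Local Open Scope ring_scope.
Set Implicit Arguments. Unset Strict Implicit. Unset Printing Implicit Defensive.

(* A line of the extended scroll defined by [psi] that equals [<P, Q>] is
   [<rho1(X), rho2(X psi)>] with [P ~ rho1(X)] and [Q ~ rho2(X psi)], because the
   two curves span disjoint subspaces.  As [rho_i] is injective on points, two
   such scrolls with matrices [psi], [psi'] over F_q give [X psi' ~ X psi]: [X] is
   an eigenvector of the F_q-matrix [psi' adj(psi)].  This is the vanishing at [X]
   of a binary quadratic form over F_q, whose nontrivial zeros are defined over
   F_{q^2}; as [P], hence [X], is not, the form is zero, the matrix is scalar and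
   [psi' ~ psi].  The Frobenius images of [<P, Q>] are the lines with parameter
   [X^(q^i)], since [sigma] fixes [e1], [e2] and [psi]. *)


Section FixedMatrices.
Variable L : fieldType.

Lemma mx_fixedP m r c (A : 'M[L]_(r, c)) : mx_fixed m A <-> frob_mx m A = A.
Proof.
split=> [fixA | frobA i j]; first by apply/matrixP => i j; rewrite mxE fixA.
by rewrite -{2}frobA mxE.
Qed.

Lemma mx_fixed_expn q i r c (A : 'M[L]_(r, c)) : mx_fixed q A -> mx_fixed (q ^ i) A.
Proof.
move=> fixA j k; elim: i => [|i IH]; first by rewrite expn0 expr1.
by rewrite expnS exprM fixA IH.
Qed.

Lemma mx_fixed_frob m m' r c (A : 'M[L]_(r, c)) :
  mx_fixed m A -> mx_fixed m (frob_mx m' A).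
Proof. by move=> fixA i j; rewrite mxE -exprM mulnC exprM fixA. Qed.

Lemma frob_col_mx m r1 r2 c (A : 'M[L]_(r1, c)) (B : 'M[L]_(r2, c)) :
  frob_mx m (col_mx A B) = col_mx (frob_mx m A) (frob_mx m B).
Proof. exact: map_col_mx. Qed.

End FixedMatrices.

Section Frobenius.
Variables (L : fieldType) (m : nat).
Hypothesis pchar_m : [pchar L].-nat m.

Lemma frob_is_nmod_morphism : nmod_morphism (fun x : L => x ^+ m).
Proof.
split; last by move=> x y; exact: exprDn_pchar.
by case/andP: pchar_m => m_gt0 _; rewrite expr0n gtn_eqF.
Qed.

Lemma frob_is_monoid_morphism : monoid_morphism (fun x : L => x ^+ m).
Proof. by split; [exact: expr1n | move=> x y; exact: exprMn]. Qed.

Definition frob_rmorphism : {rmorphism L -> L} :=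
  HB.pack (fun x : L => x ^+ m)
    (GRing.isNmodMorphism.Build _ _ _ frob_is_nmod_morphism)
    (GRing.isMonoidMorphism.Build _ _ _ frob_is_monoid_morphism).

Lemma frob_mxE r c (A : 'M[L]_(r, c)) : frob_mx m A = map_mx frob_rmorphism A.
Proof. by []. Qed.

Lemma frob_mxM r s c (A : 'M[L]_(r, s)) (B : 'M[L]_(s, c)) :
  frob_mx m (A *m B) = frob_mx m A *m frob_mx m B.
Proof. by rewrite !frob_mxE map_mxM. Qed.

Lemma frob_mx_eq0 r c (A : 'M[L]_(r, c)) : (frob_mx m A == 0) = (A == 0).
Proof. by rewrite frob_mxE map_mx_eq0. Qed.

Lemma frob_eqmx r1 r2 c (A : 'M[L]_(r1, c)) (B : 'M[L]_(r2, c)) :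
  (frob_mx m A == frob_mx m B)%MS = (A == B)%MS.
Proof. by rewrite !frob_mxE !map_submx. Qed.

Lemma mx_fixed_mulmx r s c (A : 'M[L]_(r, s)) (B : 'M[L]_(s, c)) :
  mx_fixed m A -> mx_fixed m B -> mx_fixed m (A *m B).
Proof. by move=> /mx_fixedP fixA /mx_fixedP fixB; apply/mx_fixedP; rewrite frob_mxM fixA fixB. Qed.

Lemma mx_fixed_adj n (A : 'M[L]_n) : mx_fixed m A -> mx_fixed m (\adj A).
Proof. by move=> /mx_fixedP fixA; apply/mx_fixedP; rewrite frob_mxE map_mx_adj -frob_mxE fixA. Qed.

(* Either [t^m = t], or [t^m] is the other root, so [a (t^m + t) + b = 0];
   applying Frobenius to that relation gives [t^(m^2) = t^m^m = t]. *)
Lemma quadratic_root_fixed (a b c t : L) : a != 0 ->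
  a ^+ m = a -> b ^+ m = b -> c ^+ m = c ->
  a * t ^+ 2 + b * t + c = 0 -> t ^+ (m ^ 2) = t.
Proof.
move=> a_neq0 fixa fixb fixc root_t.
pose f := frob_rmorphism; have fE x : f x = x ^+ m by [].
have root_tm : a * (t ^+ m) ^+ 2 + b * t ^+ m + c = 0.
  by move: (congr1 f root_t); rewrite !rmorphD !rmorphM rmorph0 !fE fixa fixb fixc expr2.
have : (t ^+ m - t) * (a * (t ^+ m + t) + b) = 0.
  transitivity ((a * (t ^+ m) ^+ 2 + b * t ^+ m + c) - (a * t ^+ 2 + b * t + c)).
    by ring.
  by rewrite root_tm root_t subrr.
rewrite expnS expn1 exprM; move/eqP; rewrite mulf_eq0 subr_eq0.
case/orP => [/eqP tm | /eqP sum0]; first by rewrite !tm.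
have : a * ((t ^+ m) ^+ m - t) = 0.
  move: (congr1 f sum0); rewrite !(rmorphD, rmorphM) rmorph0 !fE fixa fixb => sum0m.
  transitivity ((a * ((t ^+ m) ^+ m + t ^+ m) + b) - (a * (t ^+ m + t) + b)).
    by ring.
  by rewrite sum0m sum0 subrr.
by move/eqP; rewrite mulf_eq0 (negbTE a_neq0) subr_eq0 => /eqP.
Qed.

Lemma binary_form_root (a b c u v : L) : a != 0 ->
  a ^+ m = a -> b ^+ m = b -> c ^+ m = c ->
  a * u ^+ 2 + b * u * v + c * v ^+ 2 = 0 ->
  exists2 r, r ^+ (m ^ 2) = r & u = r * v.
Proof.
move=> a_neq0 fixa fixb fixc form0.
have [v0 | v_neq0] := eqVneq v 0.
  have : a * u ^+ 2 = 0 by rewrite -[RHS]form0 v0; ring.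
  move/eqP; rewrite mulf_eq0 (negbTE a_neq0) expf_eq0 /= => /eqP ->.
  by exists 0; rewrite ?v0 ?mulr0 // expr0n expn_eq0 andbC gtn_eqF //; case/andP: pchar_m.
exists (u / v); last by rewrite divfK.
apply: quadratic_root_fixed a_neq0 fixa fixb fixc _.
apply: (mulIf (expf_neq0 2 v_neq0)); rewrite mul0r -[RHS]form0; field.
exact: v_neq0.
Qed.

End Frobenius.

Section ProjectiveLine.
Variable L : fieldType.
Implicit Types X Y Z : 'rV[L]_2.

Definition rV2 (u v : L) : 'rV[L]_2 := \row_(j < 2) if j == 0 then u else v.

Definition on_pg1 m X : Prop :=
  exists Z, [/\ Z != 0, mx_fixed m Z & (X == Z)%MS].

Lemma ord2_cases (k : 'I_2) : k = 0 \/ k = 1.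
Proof. by case: k => [[|[|//]]] lt_k2; [left | right]; apply: val_inj. Qed.

Lemma rV2_eq X Y : X 0 0 = Y 0 0 -> X 0 1 = Y 0 1 -> X = Y.
Proof.
move=> eq0 eq1; apply/matrixP => i j; rewrite (ord1 i).
by case: (ord2_cases j) => ->.
Qed.

Lemma rV2_eq0 X : (X == 0) = (X 0 0 == 0) && (X 0 1 == 0).
Proof.
apply/eqP/andP => [-> | [/eqP X0 /eqP X1]]; first by rewrite !mxE.
by apply: rV2_eq; rewrite mxE.
Qed.

Lemma rV2_sub_cross X Y : Y != 0 -> X 0 0 * Y 0 1 = X 0 1 * Y 0 0 -> (X <= Y)%MS.
Proof.
rewrite rV2_eq0 negb_and => Y_neq0 cross; apply/sub_rVP.
have [Y0 | Y0_neq0] := eqVneq (Y 0 0) 0.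
  rewrite Y0 eqxx /= in Y_neq0.
  exists (X 0 1 / Y 0 1); apply: rV2_eq; rewrite mxE ?divfK //.
  by move: cross; rewrite Y0 mulr0 => /eqP; rewrite mulf_eq0 (negbTE Y_neq0) orbF mulr0 => /eqP.
exists (X 0 0 / Y 0 0); apply: rV2_eq; rewrite mxE ?divfK //.
by rewrite mulrAC cross mulfK.
Qed.

Lemma on_pg1_cross m X u v : X != 0 -> u ^+ m = u -> v ^+ m = v ->
  (u != 0) || (v != 0) -> X 0 0 * v = X 0 1 * u -> on_pg1 m X.
Proof.
move=> X_neq0 fixu fixv uv_neq0 cross.
have Z_neq0 : rV2 u v != 0 by rewrite rV2_eq0 !mxE /= negb_and.
exists (rV2 u v); split=> //; first by move=> i j; rewrite mxE; case: ifP.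
have sub_XZ : (X <= rV2 u v)%MS by apply: rV2_sub_cross; rewrite ?mxE.
by rewrite -(mxrank_leqif_eq sub_XZ) !rank_rV X_neq0 Z_neq0.
Qed.

Lemma binary_form_eq0 q (a b c : L) X : [pchar L].-nat q ->
  a ^+ q = a -> b ^+ q = b -> c ^+ q = c -> X != 0 -> ~ on_pg1 (q ^ 2) X ->
  a * X 0 0 ^+ 2 + b * X 0 0 * X 0 1 + c * X 0 1 ^+ 2 = 0 ->
  [/\ a = 0, b = 0 & c = 0].
Proof.
move=> pchar_q fixa fixb fixc X_neq0 X_irr form0.
have fix0 : (0 : L) ^+ (q ^ 2) = 0.
  by rewrite expr0n expn_eq0 andbC gtn_eqF //; case/andP: pchar_q.
have fix1 : (1 : L) ^+ (q ^ 2) = 1 by exact: expr1n.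
have [a0 | a_neq0] := eqVneq a 0; last first.
  have [r fixr s_rt] := binary_form_root pchar_q a_neq0 fixa fixb fixc form0.
  by case: X_irr; apply: on_pg1_cross fixr fix1 _ _; rewrite ?oner_neq0 ?orbT // s_rt mulr1 mulrC.
have [c0 | c_neq0] := eqVneq c 0; last first.
  have form0' : c * X 0 1 ^+ 2 + b * X 0 1 * X 0 0 + a * X 0 0 ^+ 2 = 0.
    by rewrite -[RHS]form0; ring.
  have [r fixr t_rs] := binary_form_root pchar_q c_neq0 fixc fixb fixa form0'.
  by case: X_irr; apply: on_pg1_cross fix1 fixr _ _; rewrite ?oner_neq0 // t_rs mulr1 mulrC.
split=> //; apply/eqP; apply: contraT => b_neq0; case: X_irr.
have : b * (X 0 0 * X 0 1) = 0 by rewrite -[RHS]form0 a0 c0; ring.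
move/eqP; rewrite mulf_eq0 (negbTE b_neq0) mulf_eq0 /= => /orP [] /eqP X0.
  by apply: on_pg1_cross X_neq0 fix0 fix1 _ _; rewrite ?oner_neq0 ?orbT // X0 mul0r mulr0.
by apply: on_pg1_cross X_neq0 fix1 fix0 _ _; rewrite ?oner_neq0 // X0 mul0r mulr0.
Qed.

Lemma mx22_eq (A B : 'M[L]_2) : A 0 0 = B 0 0 -> A 0 1 = B 0 1 ->
  A 1 0 = B 1 0 -> A 1 1 = B 1 1 -> A = B.
Proof.
move=> eq00 eq01 eq10 eq11; apply/matrixP => i j.
by case: (ord2_cases i) => ->; case: (ord2_cases j) => ->.
Qed.

Lemma mulmx_rV2 X (A : 'M[L]_2) j : (X *m A) 0 j = X 0 0 * A 0 j + X 0 1 * A 1 j.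
Proof. by rewrite mxE !big_ord_recl big_ord0 addr0 (_ : lift ord0 ord0 = 1) //; exact: val_inj. Qed.

(* The eigenvector condition [X B ~ X] is the vanishing at [X] of the form
   [-b01 s^2 + (b00 - b11) s t + b10 t^2]. *)
Lemma eigenvector_scalar_mx q (B : 'M[L]_2) X : [pchar L].-nat q ->
  mx_fixed q B -> X != 0 -> ~ on_pg1 (q ^ 2) X -> (X *m B <= X)%MS ->
  B = (B 0 0)%:M.
Proof.
move=> pchar_q fixB X_neq0 X_irr /sub_rVP [c XB].
have fixN (x : L) : x ^+ q = x -> (- x) ^+ q = - x.
  by move=> fixx; rewrite exprNn_pchar // fixx.
have fixB' (x y : L) : x ^+ q = x -> y ^+ q = y -> (x - y) ^+ q = x - y.
  by move=> fixx fixy; rewrite exprDn_pchar // fixx (fixN _ fixy).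
have form0 : - B 0 1 * X 0 0 ^+ 2 + (B 0 0 - B 1 1) * X 0 0 * X 0 1
             + B 1 0 * X 0 1 ^+ 2 = 0.
  transitivity ((X *m B) 0 0 * X 0 1 - (X *m B) 0 1 * X 0 0).
    by rewrite !mulmx_rV2; ring.
  by rewrite XB !mxE; ring.
have [/eqP B01 /eqP B_diag B10] := binary_form_eq0 pchar_q (fixN _ (fixB 0 1))
  (fixB' _ _ (fixB 0 0) (fixB 1 1)) (fixB 1 0) X_neq0 X_irr form0.
move: B01 B_diag; rewrite oppr_eq0 subr_eq0 => /eqP B01 /eqP B_diag.
by apply: mx22_eq; rewrite !mxE /= ?mulr1n ?mulr0n.
Qed.

End ProjectiveLine.

Section NormalRationalCurve.
Variable L : fieldType.
Implicit Types X Y : 'rV[L]_2.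

Lemma nrc_vec_frob m d X : frob_mx m (nrc_vec d X) = nrc_vec d (frob_mx m X).
Proof. by apply/matrixP => i j; rewrite !mxE exprMn -!exprM mulnC [(m * j)%N]mulnC. Qed.

Lemma nrc_vec_scale d c X : nrc_vec d (c *: X) = c ^+ d *: nrc_vec d X.
Proof.
apply/matrixP => i j; rewrite !mxE !exprMn.
have le_jd : (j <= d)%N by rewrite -ltnS ltn_ord.
by rewrite -[in c ^+ d](subnK le_jd) exprD; ring.
Qed.

(* Compare the first two and the last two coordinates of [nrc_vec]:
   [s^d = c s'^d], [s^(d-1) t = c s'^(d-1) t'], and symmetrically in [t]. *)
Lemma nrc_vec_sub_inj d X Y : (0 < d)%N -> X != 0 -> Y != 0 ->
  (nrc_vec d X <= nrc_vec d Y)%MS -> (X <= Y)%MS.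
Proof.
case: d => // k _ X_neq0 Y_neq0 /sub_rVP [c XY].
apply: rV2_sub_cross Y_neq0 _.
have E i := congr1 (fun V : 'rV_k.+2 => V 0 i) XY.
move: (E ord0) (E (inord 1)) (E ord_max) (E (inord k)).
rewrite !mxE /= ?inordK // subn0 subnn subSS subn0 subSn // subnn !expr0 !expr1 !mulr1 !mul1r.
set s := X 0 0; set t := X 0 1; set s' := Y 0 0; set t' := Y 0 1.
move=> E0 E1 Ed Ed1; move: X_neq0; rewrite rV2_eq0 negb_and -/s -/t.
case/orP => [s_neq0 | t_neq0].
  apply: (mulfI (expf_neq0 k s_neq0)); apply/eqP; rewrite -subr_eq0; apply/eqP.
  transitivity (s ^+ k.+1 * t' - s ^+ k * t * s'); first by rewrite exprS; ring.
  by rewrite E0 E1 exprS; ring.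
apply: (mulfI (expf_neq0 k t_neq0)); apply/eqP; rewrite -subr_eq0; apply/eqP.
transitivity (s * t ^+ k * t' - t ^+ k.+1 * s'); first by rewrite exprS; ring.
by rewrite Ed Ed1 exprS; ring.
Qed.

Variables (d N : nat) (e : 'M[L]_(d.+1, N.+1)).

Lemma rho_sub X : (rho e X <= e)%MS.
Proof. exact: submxMl. Qed.

Lemma rho_scale c X : rho e (c *: X) = c ^+ d *: rho e X.
Proof. by rewrite /rho nrc_vec_scale -scalemxAl. Qed.

Lemma rho_eqmx X Y : (X == Y)%MS -> (rho e X == rho e Y)%MS.
Proof.
have rho_submx Z Z' : (Z <= Z')%MS -> (rho e Z <= rho e Z')%MS.
  by case/sub_rVP => a ->; rewrite rho_scale scalemx_sub.
by case/andP => XY YX; rewrite !rho_submx.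
Qed.

Lemma rho_sub_inj X Y : (0 < d)%N -> row_free e -> X != 0 -> Y != 0 ->
  (rho e X <= rho e Y)%MS -> (X <= Y)%MS.
Proof. by move=> d_gt0 free_e X_neq0 Y_neq0; rewrite submxMfree //; exact: nrc_vec_sub_inj. Qed.

Lemma rho_frob m X : [pchar L].-nat m -> mx_fixed m e ->
  frob_mx m (rho e X) = rho e (frob_mx m X).
Proof. by move=> pchar_m /mx_fixedP fix_e; rewrite /rho frob_mxM // nrc_vec_frob fix_e. Qed.

Lemma on_curve_rho m P X : on_pg1 m X -> (P == rho e X)%MS -> on_curve m e P.
Proof.
case=> Z [Z_neq0 fixZ XZ] PX; exists Z; split=> //; split=> //.
by apply/eqmxP; apply: eqmx_trans (eqmxP PX) (eqmxP (rho_eqmx XZ)).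
Qed.

End NormalRationalCurve.

(* Modular law: [(C + D) :&: E1 = C + (D :&: E1)] when [C <= E1]. *)
Lemma addsmx_direct_subl (L : fieldType) n r1 r2 (E1 : 'M[L]_(r1, n)) (E2 : 'M[L]_(r2, n))
    a b c k (A : 'M[L]_(a, n)) (B : 'M[L]_(b, n)) (C : 'M[L]_(c, n)) (D : 'M[L]_(k, n)) :
  \rank (E1 :&: E2)%MS = 0%N -> (A <= E1)%MS -> (C <= E1)%MS -> (D <= E2)%MS ->
  (A + B <= C + D)%MS -> (A <= C)%MS.
Proof.
move=> E12_disjoint A_E1 C_E1 D_E2 AB_CD.
have : (A <= (C + D) :&: E1)%MS.
  by rewrite sub_capmx A_E1 andbT; apply: submx_trans AB_CD; exact: addsmxSl.
rewrite -(matrix_modl D C_E1) => /submx_trans; apply.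
rewrite addsmx_sub submx_refl /=; apply: submx_trans (capmxS D_E2 (submx_refl E1)) _.
by move/eqP: E12_disjoint; rewrite capmxC mxrank_eq0 => /eqP ->; exact: sub0mx.
Qed.

Lemma eqmx_col_mx_direct (L : fieldType) n r1 r2 (E1 : 'M[L]_(r1, n)) (E2 : 'M[L]_(r2, n))
    a b c k (A : 'M[L]_(a, n)) (B : 'M[L]_(b, n)) (C : 'M[L]_(c, n)) (D : 'M[L]_(k, n)) :
  \rank (E1 :&: E2)%MS = 0%N -> (A <= E1)%MS -> (C <= E1)%MS ->
  (B <= E2)%MS -> (D <= E2)%MS ->
  (col_mx A B == col_mx C D)%MS -> (A == C)%MS && (B == D)%MS.
Proof.
move=> E12_disjoint A_E1 C_E1 B_E2 D_E2.
have E21_disjoint : \rank (E2 :&: E1)%MS = 0%N by rewrite capmxC.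
rewrite -!addsmxE => /andP [AB_CD CD_AB].
have BA_DC : (B + A <= D + C)%MS by rewrite addsmxC (addsmxC D).
have DC_BA : (D + C <= B + A)%MS by rewrite addsmxC (addsmxC B).
apply/andP; split; apply/andP; split.
- exact: (addsmx_direct_subl E12_disjoint A_E1 C_E1 D_E2 AB_CD).
- exact: (addsmx_direct_subl E12_disjoint C_E1 A_E1 B_E2 CD_AB).
- exact: (addsmx_direct_subl E21_disjoint B_E2 D_E2 C_E1 BA_DC).
- exact: (addsmx_direct_subl E21_disjoint D_E2 B_E2 A_E1 DC_BA).
Qed.

(* [B = psi' adj(psi)] is fixed and has [X] as an eigenvector, hence is scalar. *)
Lemma mx_fixed_proportional (L : fieldType) q (psi psi' : 'M[L]_2) (X : 'rV[L]_2) :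
  [pchar L].-nat q -> psi \in unitmx -> psi' \in unitmx ->
  mx_fixed q psi -> mx_fixed q psi' -> X != 0 -> ~ on_pg1 (q ^ 2) X ->
  (X *m psi' <= X *m psi)%MS ->
  exists2 k, k != 0 & psi' = k *: psi.
Proof.
move=> pchar_q psi_unit psi'_unit fix_psi fix_psi' X_neq0 X_irr sub_psi.
have det_neq0 : \det psi != 0 by rewrite -unitfE -unitmxE.
pose B := psi' *m \adj psi.
have fixB : mx_fixed q B.
  by apply: (mx_fixed_mulmx pchar_q) => //; exact: (mx_fixed_adj pchar_q).
have XB_X : (X *m B <= X)%MS.
  rewrite mulmxA; apply: submx_trans (submxMr _ sub_psi) _.
  by rewrite -mulmxA mul_mx_adj mul_mx_scalar scalemx_sub.
have B_scalar := eigenvector_scalar_mx pchar_q fixB X_neq0 X_irr XB_X.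
have psi'E : \det psi *: psi' = B 0 0 *: psi.
  by rewrite -mul_mx_scalar -mul_adj_mx mulmxA -/B {1}B_scalar mul_scalar_mx.
have B00_neq0 : B 0 0 != 0.
  apply: contraTneq psi'_unit => B00; rewrite B00 scale0r in psi'E.
  move/eqP: psi'E; rewrite scalemx_eq0 (negbTE det_neq0) /= => /eqP ->.
  by rewrite unitmxE det0 unitr0.
exists (B 0 0 / \det psi); first by rewrite mulf_neq0 ?invr_eq0.
by rewrite mulrC -scalerA -psi'E scalerA mulVf // scale1r.
Qed.

Lemma pchar_nat_card (F : finFieldType) q n :
  #|F| = (q ^ n)%N -> (0 < n)%N -> [pchar F].-nat q.
Proof.
move=> cardF n_gt0; have [p p_prime pchar_p] := finPcharP F.
rewrite (eq_pnat _ (pcharf_eq pchar_p)).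
have : p.-nat #|F| by rewrite (card_pprimeChar pchar_p) pnatX pnat_id.
by rewrite cardF pnatX gtn_eqF ?orbF.
Qed.

Section Scrolls.
Variables (L : fieldType) (m d1 d2 N : nat).
Variables (e1 : 'M[L]_(d1.+1, N.+1)) (e2 : 'M[L]_(d2.+1, N.+1)).

Lemma scroll_line_scale (psi : 'M[L]_2) k M : k != 0 ->
  scroll_line m e1 e2 (k *: psi) M <-> scroll_line m e1 e2 psi M.
Proof.
move=> k_neq0.
have lineE X : (col_mx (rho e1 X) (rho e2 (X *m (k *: psi)))
                :=: col_mx (rho e1 X) (rho e2 (X *m psi)))%MS.
  rewrite -scalemxAr rho_scale.
  apply: eqmx_trans (eqmx_sym (addsmxE _ _)) (eqmx_trans _ (addsmxE _ _)).
  exact/adds_eqmx/eqmx_scale/expf_neq0.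
by split=> -[X [X_neq0 [fixX MX]]]; exists X; do 2!split=> //; rewrite ?lineE in MX *.
Qed.

Lemma scroll_line_frob m' (psi : 'M[L]_2) M : [pchar L].-nat m' ->
  mx_fixed m' e1 -> mx_fixed m' e2 -> mx_fixed m' psi ->
  scroll_line m e1 e2 psi M -> scroll_line m e1 e2 psi (frob_mx m' M).
Proof.
move=> pchar_m' fix_e1 fix_e2 /mx_fixedP fix_psi [X [X_neq0 [fixX MX]]].
exists (frob_mx m' X); split; first by rewrite frob_mx_eq0.
split; first exact: mx_fixed_frob.
have -> : frob_mx m' X *m psi = frob_mx m' (X *m psi) by rewrite frob_mxM // fix_psi.
by rewrite -!rho_frob // -frob_col_mx frob_eqmx.
Qed.

Hypothesis e12_disjoint : \rank (e1 :&: e2)%MS = 0%N.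

Lemma scroll_line_col_mx (psi : 'M[L]_2) (P Q : 'rV[L]_N.+1) :
  (P <= e1)%MS -> (Q <= e2)%MS ->
  scroll_line m e1 e2 psi (col_mx P Q) ->
  exists X, [/\ X != 0, (P == rho e1 X)%MS & (Q == rho e2 (X *m psi))%MS].
Proof.
move=> P_e1 Q_e2 [X [X_neq0 [_ PQX]]]; exists X.
have /andP [PX QX] := eqmx_col_mx_direct e12_disjoint P_e1 (rho_sub e1 X) Q_e2
  (rho_sub e2 (X *m psi)) PQX.
by split.
Qed.

Lemma scroll_lines_proportional q (psi psi' : 'M[L]_2) (P Q : 'rV[L]_N.+1) :
  [pchar L].-nat q -> (0 < d1)%N -> (0 < d2)%N -> row_free e1 -> row_free e2 ->
  (P <= e1)%MS -> (Q <= e2)%MS -> ~ on_curve (q ^ 2) e1 P ->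
  psi \in unitmx -> psi' \in unitmx -> mx_fixed q psi -> mx_fixed q psi' ->
  scroll_line m e1 e2 psi (col_mx P Q) -> scroll_line m e1 e2 psi' (col_mx P Q) ->
  exists2 k, k != 0 & psi' = k *: psi.
Proof.
move=> pchar_q d1_gt0 d2_gt0 free_e1 free_e2 P_e1 Q_e2 P_irr psi_unit psi'_unit
  fix_psi fix_psi' /scroll_line_col_mx[]// X [X_neq0 PX QX]
  /scroll_line_col_mx[]// X' [X'_neq0 PX' QX'].
have XX' : (X == X')%MS.
  by apply/andP; split; apply: (rho_sub_inj d1_gt0 free_e1) => //;
    rewrite -(eqmxP PX) -(eqmxP PX').
have X_irr : ~ on_pg1 (q ^ 2) X by move/on_curve_rho/(_ PX).
have Xpsi_neq0 A : A \in unitmx -> X *m A != 0.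
  by rewrite -row_free_unit => /mulmx_free_eq0 ->.
apply: (mx_fixed_proportional pchar_q psi_unit psi'_unit fix_psi fix_psi' X_neq0 X_irr).
apply: (rho_sub_inj d2_gt0 free_e2 (Xpsi_neq0 _ psi'_unit) (Xpsi_neq0 _ psi_unit)).
have XX'psi' : (X *m psi' == X' *m psi')%MS by apply/eqmxP/eqmxMr/eqmxP.
by rewrite -(eqmxP QX) (eqmxP (rho_eqmx e2 XX'psi')) -(eqmxP QX').
Qed.

End Scrolls.

Theorem lemma3p4 (L : finFieldType) (q n N d1 d2 : nat)
    (e1 : 'M[L]_(d1.+1, N.+1)) (e2 : 'M[L]_(d2.+1, N.+1))
    (P Q : 'rV[L]_(N.+1)) :
  #|L| = (q ^ n)%N -> (0 < n)%N ->
  (1 <= d1 <= q)%N -> (1 <= d2 <= q)%N ->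
  mx_fixed q e1 -> mx_fixed q e2 -> row_free e1 -> row_free e2 ->
  \rank (e1 :&: e2)%MS = 0%N ->
  on_curve (q ^ n) e1 P -> ~ on_curve q e1 P -> ~ on_curve (q ^ 2) e1 P ->
  on_curve (q ^ n) e2 Q -> ~ on_curve q e2 Q ->
  (forall S S' : 'M[L]_(2, N.+1) -> Prop,
      nr_scroll (q ^ n) (q ^ n) e1 e2 S -> nr_scroll q (q ^ n) e1 e2 S ->
      S (col_mx P Q) ->
      nr_scroll (q ^ n) (q ^ n) e1 e2 S' -> nr_scroll q (q ^ n) e1 e2 S' ->
      S' (col_mx P Q) ->
      forall M, S M <-> S' M)
  /\
  (forall S : 'M[L]_(2, N.+1) -> Prop,
      nr_scroll (q ^ n) (q ^ n) e1 e2 S -> nr_scroll q (q ^ n) e1 e2 S ->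
      S (col_mx P Q) ->
      forall i : nat, S (col_mx (frob_mx (q ^ i) P) (frob_mx (q ^ i) Q))).
Proof.
move=> cardL n_gt0 /andP [d1_gt0 _] /andP [d2_gt0 _] fix_e1 fix_e2 free_e1 free_e2
  e12_disjoint [Y [_ [_ PY]]] _ P_irr [Y' [_ [_ QY']]] _.
have pchar_q := pchar_nat_card cardL n_gt0.
have P_e1 : (P <= e1)%MS by rewrite (eqmxP PY) rho_sub.
have Q_e2 : (Q <= e2)%MS by rewrite (eqmxP QY') rho_sub.
split.
  move=> S S' _ [psi [psi_unit [fix_psi S_psi]]] /S_psi PQ_S
    _ [psi' [psi'_unit [fix_psi' S'_psi']]] /S'_psi' PQ_S' M.
  have [k k_neq0 psi'E] := scroll_lines_proportional e12_disjoint pchar_q d1_gt0 d2_gt0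
    free_e1 free_e2 P_e1 Q_e2 P_irr psi_unit psi'_unit fix_psi fix_psi' PQ_S PQ_S'.
  by rewrite S_psi S'_psi' psi'E scroll_line_scale.
move=> S _ [psi [_ [fix_psi S_psi]]] /S_psi PQ_S i.
apply/S_psi; rewrite -frob_col_mx.
apply: scroll_line_frob PQ_S; rewrite ?pnatX ?pchar_q //; exact: mx_fixed_expn.
Qed.
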